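(* Let $n$ and $0<n_1<\cdots<n_d<n$ be integers with $m_1=n_1$, $m_k=n_k-n_{k-1}$ ($2\le k\le d$), $m_{d+1}=n-n_d$, and regard $\mathrm{Flag}(n_1,\dots,n_d;n)=\{(VJ_1V^{\mathsf T},\dots,VJ_dV^{\mathsf T}):V\in\mathrm{O}(n)\}$ as a submanifold of $(\mathbb{R}^{n\times n})^d$ with the Frobenius inner product. Let $V(t)$ be a differentiable curve in $\mathrm{O}(n)$ with $\Lambda(t)=V(t)^{\mathsf T}\dot V(t)$ satisfying $\Lambda(k,k)\equiv0$ ($k=1,\dots,d+1$), $c(t)=V(t)(J_1,\dots,J_d)V(t)^{\mathsf T}$, and let $X(t)\in\mathfrak{so}(n)$ be differentiable with $X(k,k)\equiv0$. Let \[ T_3(t)=V(t)\big(\Lambda J_1X+XJ_1\Lambda,\dots,\Lambda J_dX+XJ_d\Lambda\big)V(t)^{\mathsf T}. \] Then the orthogonal projection of $T_3(t)$ onto $\mathbb{T}_{c(t)}\mathrm{Flag}(n_1,\dots,n_d;n)$ equals $V(t)(Z_1(t),\dots,Z_d(t))V(t)^{\mathsf T}$, where $Z_1,\dots,Z_d$ are symmetric with blocks \[ Z_k(p,q)=\begin{cases}-\sum_{1\le l\le d,\ l\ne k}\big(X(k,l)\Lambda(l,d+1)+\Lambda(l,k)^{\mathsf T}X(d+1,l)^{\mathsf T}\big), & p=k,\ q=d+1,\\[2pt] -\sum_{1\le l\le d,\ l\ne k}\big(X(d+1,l)\Lambda(l,k)+\Lambda(l,d+1)^{\mathsf T}X(k,l)^{\mathsf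 T}\big), & p=d+1,\ q=k,\\[2pt] 0, & \text{otherwise}.\end{cases} \]
   Context: $J_k=\operatorname{diag}(-I_{m_1},\dots,-I_{m_{k-1}},I_{m_k},-I_{m_{k+1}},\dots,-I_{m_{d+1}})$. $V(X_1,\dots,X_d)V^{\mathsf T}$ denotes $(VX_1V^{\mathsf T},\dots,VX_dV^{\mathsf T})$. For an $n\times n$ matrix $M$, $M(p,q)$ denotes its $(p,q)$ block in the partition $n=m_1+\cdots+m_{d+1}$. *)

From HB Require Import structures.
From mathcomp Require Import all_boot all_order all_algebra.
From mathcomp Require Import all_classical all_reals all_analysis.
Set Implicit Arguments. Unset Strict Implicit. Unset Printing Implicit Defensive.
Import Order.TTheory GRing.Theory Num.Theory.
Local Open Scope ring_scope.

Section FlagDefs.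
Variable R : realType.
Variables (n d : nat) (nb : nat -> nat).
(* nb k = n_k for 1 <= k <= d; blocks are indexed 1 .. d+1. *)

Definition bd (k : nat) : nat :=
  if k == 0%N then 0%N else if (k <= d)%N then nb k else n.

(* index i (0-based) lies in the k-th block (1 <= k <= d+1) *)
Definition inblk (k i : nat) : bool := (bd k.-1 <= i < bd k)%N.

Definition Jmat (k : nat) : 'M[R]_n :=
  \matrix_(i, j) (if i == j then (if inblk k i then 1 else -1) else 0).

(* d-tuples of n x n matrices: functions nat -> 'M_n, components 1..d used *)
Definition tup := nat -> 'M[R]_n.

Definition tup_eq (A B : tup) : Prop := forall k, (1 <= k <= d)%N -> A k = B k.

Definition tup_sub (A B : tup) : tup := fun k => A k - B k.

Definition conjt (W : 'M[R]_n) (A : tup) : tup := fun k => W *m A k *m W^T.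

Definition orthogonal_mx (W : 'M[R]_n) : Prop := W^T *m W = 1%:M.

Definition flag : set tup :=
  [set A | exists W, orthogonal_mx W /\ tup_eq A (conjt W Jmat)].

Definition frob (A B : tup) : R := \sum_(1 <= k < d.+1) \tr ((A k)^T *m B k).

Definition tangent_flag (c : tup) : set tup :=
  [set v | exists g : R -> tup,
     (forall t, flag (g t)) /\ tup_eq (g 0) c /\
     (forall k, (1 <= k <= d)%N -> forall t, derivable (fun s => g s k) t 1) /\
     tup_eq v (fun k => 'D_1 (fun s => g s k) 0)].

Definition is_orth_proj (T : set tup) (x p : tup) : Prop :=
  T p /\ forall y, T y -> frob (tup_sub x p) y = 0.

Definition Lam (V : R -> 'M[R]_n) (t : R) : 'M[R]_n := (V t)^T *m 'D_1 V t.

Definition zero_diag_blocks (M : 'M[R]_n) : Prop :=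
  forall k (i j : 'I_n), (1 <= k <= d.+1)%N -> inblk k i -> inblk k j -> M i j = 0.

Definition T3 (Vt L Xt : 'M[R]_n) : tup :=
  conjt Vt (fun k => L *m Jmat k *m Xt + Xt *m Jmat k *m L).

(* Z_k, block by block; entry (i,j) of a block product M(p,l) N(l,q) is
   \sum_{r in block l} M i r * N r j. *)
Definition Zmat (L Xt : 'M[R]_n) (k : nat) : 'M[R]_n :=
  \matrix_(i, j)
   (if inblk k i && inblk d.+1 j then
      (* -sum_{l<>k} ( X(k,l) L(l,d+1) + L(l,k)^T X(d+1,l)^T ) *)
      - \sum_(1 <= l < d.+1 | l != k)
          \sum_(r < n | inblk l r) (Xt i r * L r j + L r i * Xt j r)
    else if inblk d.+1 i && inblk k j then
      (* -sum_{l<>k} ( X(d+1,l) L(l,k) + L(l,d+1)^T X(k,l)^T ) *)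
      - \sum_(1 <= l < d.+1 | l != k)
          \sum_(r < n | inblk l r) (Xt i r * L r j + L r i * Xt j r)
    else 0).

End FlagDefs.

From Pilot Require Import Defs.
From HB Require Import structures.
From mathcomp Require Import all_boot all_order all_algebra.
From mathcomp Require Import all_classical all_reals all_analysis.
From mathcomp Require Import zify ring lra.
Import Order.TTheory GRing.Theory Num.Theory.
Local Open Scope ring_scope.
Set Implicit Arguments. Unset Strict Implicit. Unset Printing Implicit Defensive.

(* Every point [C] of the flag manifold satisfies [C_k ^ 2 = 1] and
   [C_k C_l = C_l C_k]; differentiating along a curve shows that a tangent
   vector at [V (J_k)_k V^T] has the form
   [V (Y_k)_k V^T] with [Y_k J_k + J_k Y_k = 0] and
   [Y_k J_l + J_k Y_l = Y_l J_k + J_l Y_k].  On the block (p, q) this means: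
   [Y_k] vanishes unless [k] is exactly one of [p], [q], and [Y_p + Y_q = 0].
   With [A = Lambda X + X Lambda], the block (p, q) of [T3_k - Z_k] (in
   V-coordinates, [k] in {p, q}, [p <> q]) is [-A(p,q)] if [p, q <= d] and [0]
   otherwise, so its pairing with a tangent vector is [-A(p,q) (Y_p + Y_q) = 0].
   Conversely [V Z V^T] is tangent: it is the velocity at [0] of
   [s |-> V Q(s) J_k Q(s)^T V^T], where [Q] is the Cayley transform of
   [s Omega / 2] and [Omega = (A J_{d+1} - J_{d+1} A) / 4] satisfies
   [Omega J_k - J_k Omega = Z_k]. *)

Lemma big_uniq_only1 (R : nmodType) (I : eqType) (r : seq I) (P : pred I) (b : I)
    (F : I -> R) :
  uniq r -> (forall i, i \in r -> i != b -> F i = 0) ->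
  \sum_(i <- r | P i) F i = if (b \in r) && P b then F b else 0.
Proof.
elim: r => [|x r IHr] /=; first by rewrite big_nil.
move=> /andP[x_notin_r r_uniq] F0; rewrite big_cons in_cons IHr //; last first.
  by move=> i i_in_r; apply: F0; rewrite in_cons i_in_r orbT.
case: (eqVneq x b) => [<-|x_neq_b] /=.
  by rewrite (negbTE x_notin_r) /=; case: (P x); rewrite ?addr0.
by rewrite F0 ?mem_head //; case: (P x); rewrite ?add0r.
Qed.

Lemma skew_entry (R : pzRingType) m (M : 'M[R]_m) :
  M^T = - M -> forall i j, M j i = - M i j.
Proof. by move=> Mskew i j; have /matrixP/(_ i j) := Mskew; rewrite !mxE. Qed.

Lemma mxtrace_trmx_mul (R : pzRingType) m p (A B : 'M[R]_(m, p)) :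
  \tr (A^T *m B) = \sum_i \sum_j A i j * B i j.
Proof.
rewrite /mxtrace exchange_big /=; apply: eq_bigr => j _.
by rewrite mxE; apply: eq_bigr => i _; rewrite mxE.
Qed.

Section MatrixCalculus.
Variable R : realType.
Implicit Types t : R.

Lemma derivable_big_sum (I : Type) (r : seq I) (P : pred I) (F : I -> R -> R) t :
  (forall i, P i -> derivable (F i) t 1) ->
  derivable (fun s => \sum_(i <- r | P i) F i s) t 1.
Proof.
move=> dF; rewrite (_ : (fun s => _) = \sum_(i <- r | P i) F i); last first.
  by apply/funext => s; rewrite fct_sumE.
apply: (big_ind (fun f => derivable f t 1)) => [|f g|//].
- exact: (derivable_cst (0 : R)).
- exact: derivableD.
Qed.

Lemma derivable_big_prod (I : Type) (r : seq I) (P : pred I) (F : I -> R -> R) t :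
  (forall i, P i -> derivable (F i) t 1) ->
  derivable (fun s => \prod_(i <- r | P i) F i s) t 1.
Proof.
move=> dF; rewrite (_ : (fun s => _) = \prod_(i <- r | P i) F i); last first.
  by apply/funext => s; rewrite fct_prodE.
apply: (big_ind (fun f => derivable f t 1)) => [|f g|//].
- exact: (derivable_cst (1 : R)).
- exact: derivableM.
Qed.

Lemma is_derive_mxP m p (F : R -> 'M[R]_(m, p)) (dF : 'M[R]_(m, p)) t :
  is_derive t 1 F dF <-> forall i j, is_derive t 1 (fun s => F s i j) (dF i j).
Proof.
split=> [[dFt <-] i j | dFij].
  have /derivable_mxP dFt_ij := dFt.
  by apply: DeriveDef; [exact: dFt_ij | rewrite derive_mx // mxE].
have dFt : derivable F t 1.
  by apply/derivable_mxP => i j; have [] := dFij i j.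
apply: DeriveDef => //; rewrite derive_mx //; apply/matrixP => i j.
by rewrite mxE derive_val.
Qed.

Lemma is_derive_mulmx m k p (F : R -> 'M[R]_(m, k)) (G : R -> 'M[R]_(k, p)) dF dG t :
  is_derive t 1 F dF -> is_derive t 1 G dG ->
  is_derive t 1 (fun s => F s *m G s) (dF *m G t + F t *m dG).
Proof.
move=> /is_derive_mxP dFij /is_derive_mxP dGij; apply/is_derive_mxP => i j.
rewrite !mxE -big_split /=.
rewrite (_ : (fun s => _) = \sum_(r < k) (fun s => F s i r * G s r j)); last first.
  by apply/funext => s; rewrite mxE fct_sumE.
apply: is_derive_sum => r; have := is_deriveM (dFij i r) (dGij r j).
by rewrite /GRing.scale /= addrC [G t r j * _]mulrC.
Qed.

Lemma is_derive_trmx m p (F : R -> 'M[R]_(m, p)) dF t :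
  is_derive t 1 F dF -> is_derive t 1 (fun s => (F s)^T) dF^T.
Proof.
move=> /is_derive_mxP dFij; apply/is_derive_mxP => i j.
by under eq_fun do rewrite mxE; rewrite mxE.
Qed.

Lemma is_derive_line m p (M N : 'M[R]_(m, p)) t :
  is_derive t 1 (fun s => M + s *: N) N.
Proof.
apply/is_derive_mxP => i j; under eq_fun do rewrite !mxE.
have := is_deriveD (is_derive_cst (M i j) t 1)
  (is_deriveM (is_derive_id t 1) (is_derive_cst (N i j) t 1)).
by rewrite /GRing.scale /= mulr0 !add0r mulr1.
Qed.

Lemma derivable_det m (M : R -> 'M[R]_m) t :
  derivable M t 1 -> derivable (fun s => \det (M s)) t 1.
Proof.
move=> /derivable_mxP dM; apply: derivable_big_sum => sigma _.
apply: derivableM; first exact: derivable_cst.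
by apply: derivable_big_prod => i _; exact: dM.
Qed.

Lemma derivable_invmx m (M : R -> 'M[R]_m) t :
  (forall s, M s \in unitmx) -> derivable M t 1 ->
  derivable (fun s => invmx (M s)) t 1.
Proof.
move=> Munit dM; have /derivable_mxP dMij := dM.
apply/derivable_mxP => i j.
under eq_fun do rewrite /invmx Munit !mxE.
apply: derivableM.
  by apply: derivableV; [rewrite -unitfE -unitmxE | exact: derivable_det].
apply: derivableM; first exact: derivable_cst.
apply: derivable_det; apply/derivable_mxP => a b.
under eq_fun do rewrite !mxE.
exact: dMij.
Qed.

Lemma is_derive_conjmx m (W : R -> 'M[R]_m) dW (M : 'M[R]_m) t :
  is_derive t 1 W dW ->
  is_derive t 1 (fun s => W s *m M *m (W s)^T)
    (dW *m M *m (W t)^T + W t *m M *m dW^T).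
Proof.
move=> dWt; have dWM := is_derive_mulmx dWt (is_derive_cst M t 1).
have := is_derive_mulmx dWM (is_derive_trmx dWt).
by rewrite mulmx0 addr0.
Qed.

End MatrixCalculus.

Lemma orthogonal_curve_skew (R : realType) m (V : R -> 'M[R]_m) t :
  derivable V t 1 -> (forall s, orthogonal_mx (V s)) ->
  ((V t)^T *m 'D_1 V t)^T = - ((V t)^T *m 'D_1 V t).
Proof.
move=> /derivableP dV Vorth.
have := is_derive_mulmx (is_derive_trmx dV) dV.
rewrite (_ : (fun s => _) = cst 1%:M); last by apply/funext => s; exact: Vorth.
case=> _; rewrite derive_cst => /esym/eqP.
by rewrite addr_eq0 trmx_mul trmxK => /eqP.
Qed.

Lemma skew_unitmx1D (R : realFieldType) m (S : 'M[R]_m) :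
  S^T = - S -> 1%:M + S \in unitmx.
Proof.
move=> Sskew; rewrite unitmxE unitfE; apply/negP => /det0P [v v_neq0].
rewrite mulmxDr mulmx1 => /eqP; rewrite addr_eq0 => /eqP vS.
have vSv0 : v *m S *m v^T = 0.
  have : (v *m S *m v^T)^T = - (v *m S *m v^T).
    by rewrite !trmx_mul trmxK Sskew mulNmx mulmxN mulmxA.
  set w := v *m S *m v^T => /matrixP/(_ 0 0) w_anti.
  rewrite [w^T 0 0]mxE [(- w) 0 0]mxE in w_anti.
  by apply/matrixP => i j; rewrite !ord1 [RHS]mxE; lra.
have vv_sum : \sum_k v 0 k ^+ 2 = 0.
  have /matrixP/(_ 0 0) : v *m v^T = 0 by rewrite {1}vS mulNmx vSv0 oppr0.
  by rewrite !mxE; under eq_bigr do rewrite mxE -expr2.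
apply/(negP v_neq0)/eqP/matrixP => i j; rewrite ord1 mxE; apply/eqP.
by rewrite -sqrf_eq0 (psumr_eq0P _ vv_sum) // => k _; exact: sqr_ge0.
Qed.

Section Cayley.
Variables (R : realType) (m : nat).
Implicit Types S : 'M[R]_m.

Definition cayley S : 'M[R]_m := (1%:M + S) *m invmx (1%:M - S).

Lemma cayley0 : cayley 0 = 1%:M.
Proof. by rewrite /cayley addr0 subr0 invmx1 mulmx1. Qed.

Lemma cayley_orthogonal S : S^T = - S -> orthogonal_mx (cayley S).
Proof.
move=> Sskew; have NSskew : (- S)^T = - - S by rewrite linearN /= Sskew.
have unitD := skew_unitmx1D Sskew; have unitB := skew_unitmx1D NSskew.
have commDB : (1%:M + S) *m (1%:M - S) = (1%:M - S) *m (1%:M + S).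
  by rewrite !mulmxDl !mulmxDr !mul1mx !mulmx1 !mulmxN !mulNmx addrACA.
rewrite /orthogonal_mx /cayley trmx_mul trmx_inv linearB linearD /= trmx1 Sskew opprK.
rewrite mulmxA -[invmx _ *m _ *m _]mulmxA -commDB mulmxA mulVmx // mul1mx.
by rewrite mulmxV.
Qed.

Lemma cayley_line_unitmx S (s : R) : S^T = - S -> 1%:M - s *: S \in unitmx.
Proof.
by move=> Sskew; rewrite -scaleNr; apply: skew_unitmx1D; rewrite linearZ /= Sskew scalerN.
Qed.

Lemma derivable_cayley S t : S^T = - S ->
  derivable (fun s : R => cayley (s *: S)) t 1.
Proof.
move=> Sskew; apply: ex_derive; apply: is_derive_mulmx.
  exact: is_derive_line.
apply: derivableP; apply: derivable_invmx => [s|].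
  exact: cayley_line_unitmx.
by under eq_fun do rewrite -scalerN; apply: ex_derive; exact: is_derive_line.
Qed.

Lemma is_derive_cayley0 S : S^T = - S ->
  is_derive (0 : R) 1 (fun s : R => cayley (s *: S)) (S *+ 2).
Proof.
move=> Sskew; set Q := fun s => cayley (s *: S).
have dQ : is_derive (0 : R) 1 Q ('D_1 Q 0) := derivableP (@derivable_cayley S 0 Sskew).
have QD : (fun s => Q s *m (1%:M + s *: - S)) = fun s => 1%:M + s *: S.
  apply/funext => s; rewrite /Q /cayley scalerN -mulmxA mulVmx ?mulmx1 //.
  exact: cayley_line_unitmx.
have [_ DS] := is_derive_line 1%:M S (0 : R).
have [_] := is_derive_mulmx dQ (is_derive_line 1%:M (- S) 0).
rewrite QD DS /Q !scale0r addr0 mulmx1 cayley0 mul1mx => DQ.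
by apply: DeriveDef; [exact: derivable_cayley | rewrite mulr2n {2}DQ addrNK].
Qed.

End Cayley.

Section Blocks.
Variables (n d : nat) (nb : nat -> nat).
Hypothesis nb_incr : forall k, (1 <= k < d)%N -> (nb k < nb k.+1)%N.
Hypothesis nb_lt_n : (nb d < n)%N.
Local Notation bd := (bd n d nb).
Local Notation inblk := (inblk n d nb).

Lemma bd_homo : {homo bd : k l / (k <= l)%N}.
Proof.
apply: (homo_leq leqnn leq_trans) => k; rewrite /Defs.bd /=.
case: (eqVneq k 0) => [-> /=|k_neq0]; first by case: ifP.
case: (ltnP k d) => [k_lt_d|d_le_k].
  by rewrite (ltnW k_lt_d); apply/ltnW/nb_incr; lia.
case: ifP => // k_le_d.
by rewrite (_ : k = d); [exact: ltnW | lia].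
Qed.

Lemma inblkP (i : nat) : (i < n)%N ->
  exists2 p, (1 <= p <= d.+1)%N & forall l, inblk l i = (l == p).
Proof.
move=> i_lt_n; have bd_Sd : bd d.+1 = n by rewrite /Defs.bd /= ltnn.
have [|p i_lt_p p_min] := ex_minnP (ex_intro (fun l => i < bd l)%N d.+1 _).
  by rewrite bd_Sd.
have p_gt0 : (0 < p)%N by case: p i_lt_p {p_min}.
have p_le : (p <= d.+1)%N by apply: p_min; rewrite bd_Sd.
have bd_pred : (bd p.-1 <= i)%N.
  by rewrite leqNgt; apply/negP => /p_min; lia.
exists p; first lia.
move=> l; rewrite /Defs.inblk; apply/andP/eqP => [[bd_l_le i_lt_l] | ->]; last by [].
apply/eqP; rewrite eqn_leq p_min // andbT leqNgt; apply/negP => l_lt_p.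
by have := @bd_homo p l.-1; lia.
Qed.

Lemma inblk_Sd_disjoint k (i : 'I_n) : (1 <= k <= d)%N -> inblk k i -> ~~ inblk d.+1 i.
Proof.
move=> k_range; have [p _ blk_i] := inblkP (ltn_ord i).
by rewrite !blk_i => /eqP <-; apply/eqP; lia.
Qed.

End Blocks.

Section Signs.
Variables (R : realType) (n d : nat) (nb : nat -> nat).
Local Notation inblk := (inblk n d nb).
Local Notation J := (@Jmat R n d nb).

Definition blk_sign (k i : nat) : R := if inblk k i then 1 else -1.

Lemma JmatE k (i j : 'I_n) : J k i j = if i == j then blk_sign k i else 0.
Proof. by rewrite mxE. Qed.

Lemma mulmxJ (Y : 'M[R]_n) k i j : (Y *m J k) i j = Y i j * blk_sign k j.
Proof.
rewrite mxE (bigD1 j) //= JmatE eqxx big1 ?addr0 // => r r_neq_j.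
by rewrite JmatE (negbTE r_neq_j) mulr0.
Qed.

Lemma mulJmx (Y : 'M[R]_n) k i j : (J k *m Y) i j = blk_sign k i * Y i j.
Proof.
rewrite mxE (bigD1 i) //= JmatE eqxx big1 ?addr0 // => r r_neq_i.
by rewrite JmatE eq_sym (negbTE r_neq_i) mul0r.
Qed.

Lemma blk_sign_sqr k i : blk_sign k i * blk_sign k i = 1.
Proof. by rewrite /blk_sign; case: ifP; rewrite ?mulr1 ?mulrNN ?mulr1. Qed.

Lemma Jmat_sqr k : J k *m J k = 1%:M.
Proof.
apply/matrixP => i j; rewrite mulJmx JmatE !mxE.
by case: eqP => [->|]; rewrite ?blk_sign_sqr ?mulr0.
Qed.

Lemma Jmat_comm k l : J k *m J l = J l *m J k.
Proof.
apply/matrixP => i j; rewrite mulJmx mulmxJ !JmatE.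
by case: eqP => [->|]; rewrite ?mulr0 ?mul0r // mulrC.
Qed.

Lemma trmx_Jmat k : (J k)^T = J k.
Proof. by apply/matrixP => i j; rewrite !mxE eq_sym; case: eqP => // ->. Qed.

End Signs.

Section FlagTangent.
Variables (R : realType) (n d : nat) (nb : nat -> nat).
Local Notation J := (@Jmat R n d nb).
Local Notation flag := (@flag R n d nb).
Local Notation tangent_flag := (@tangent_flag R n d nb).

Lemma orthogonal_mxC (W : 'M[R]_n) : orthogonal_mx W -> W *m W^T = 1%:M.
Proof. exact: mulmx1C. Qed.

Lemma orthogonal_mxM (A B : 'M[R]_n) :
  orthogonal_mx A -> orthogonal_mx B -> orthogonal_mx (A *m B).
Proof.
move=> Aorth Borth; rewrite /orthogonal_mx trmx_mul mulmxA -[_ *m A^T *m A]mulmxA.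
by rewrite Aorth mulmx1.
Qed.

Lemma conjmx_mul (W A B : 'M[R]_n) : orthogonal_mx W ->
  (W *m A *m W^T) *m (W *m B *m W^T) = W *m (A *m B) *m W^T.
Proof. by move=> Worth; rewrite !mulmxA -[_ *m W^T *m W]mulmxA Worth mulmx1. Qed.

Lemma conjmx_inj (W A B : 'M[R]_n) : orthogonal_mx W ->
  W *m A *m W^T = W *m B *m W^T -> A = B.
Proof.
move=> Worth /(congr1 (fun M => W^T *m M *m W)).
by rewrite !mulmxA Worth !mul1mx -!mulmxA Worth !mulmx1.
Qed.

Lemma flag_sqr A k : flag A -> (1 <= k <= d)%N -> A k *m A k = 1%:M.
Proof.
move=> [W [Worth A_eq]] k_range.
by rewrite A_eq // /conjt conjmx_mul // Jmat_sqr mulmx1 orthogonal_mxC.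
Qed.

Lemma flag_comm A k l : flag A -> (1 <= k <= d)%N -> (1 <= l <= d)%N ->
  A k *m A l = A l *m A k.
Proof.
move=> [W [Worth A_eq]] k_range l_range.
by rewrite !A_eq // /conjt !conjmx_mul // Jmat_comm.
Qed.

Section AtPoint.
Variables (c y : tup R n).
Hypothesis y_tangent : tangent_flag c y.

Lemma tangent_flag_comm k l : (1 <= k <= d)%N -> (1 <= l <= d)%N ->
  y k *m c l + c k *m y l = y l *m c k + c l *m y k.
Proof.
move: y_tangent => [g [g_flag [g0 [g_der y_eq]]]] k_range l_range.
have dg p : (1 <= p <= d)%N -> is_derive (0 : R) 1 (fun s => g s p) (y p).
  by move=> p_range; rewrite y_eq //; apply: derivableP; exact: g_der.
have gC : (fun s => g s k *m g s l) = (fun s => g s l *m g s k).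
  by apply/funext => s; exact: flag_comm.
have [_ Dkl] := is_derive_mulmx (dg k k_range) (dg l l_range).
have [_ Dlk] := is_derive_mulmx (dg l l_range) (dg k k_range).
by rewrite !g0 // in Dkl Dlk; rewrite -Dkl gC Dlk.
Qed.

Lemma tangent_flag_anticomm k : (1 <= k <= d)%N -> y k *m c k + c k *m y k = 0.
Proof.
move: y_tangent => [g [g_flag [g0 [g_der y_eq]]]] k_range.
have dg : is_derive (0 : R) 1 (fun s => g s k) (y k).
  by rewrite y_eq //; apply: derivableP; exact: g_der.
have [_] := is_derive_mulmx dg dg; rewrite !g0 // => <-.
rewrite (_ : (fun s => _) = cst 1%:M) ?derive_cst //; apply/funext => s.
exact: flag_sqr.
Qed.

End AtPoint.

Section Conjugated.
Hypothesis nb_incr : forall k, (1 <= k < d)%N -> (nb k < nb k.+1)%N.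
Hypothesis nb_lt_n : (nb d < n)%N.
Local Notation inblk := (inblk n d nb).
Variables (V0 : 'M[R]_n) (Y : tup R n).
Hypothesis V0_orth : orthogonal_mx V0.
Hypothesis VYV_tangent : tangent_flag (conjt V0 J) (conjt V0 Y).

Let Y_anticomm k : (1 <= k <= d)%N -> Y k *m J k + J k *m Y k = 0.
Proof.
move=> k_range; apply: (conjmx_inj V0_orth).
rewrite mulmx0 mul0mx mulmxDr mulmxDl -!conjmx_mul //.
exact: (tangent_flag_anticomm VYV_tangent k_range).
Qed.

Let Y_comm k l : (1 <= k <= d)%N -> (1 <= l <= d)%N ->
  Y k *m J l + J k *m Y l = Y l *m J k + J l *m Y k.
Proof.
move=> k_range l_range; apply: (conjmx_inj V0_orth).
rewrite !mulmxDr !mulmxDl -!conjmx_mul //.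
exact: (tangent_flag_comm VYV_tangent k_range l_range).
Qed.

Lemma tangent_flag_entry_same k (i j : 'I_n) : (1 <= k <= d)%N ->
  inblk k i = inblk k j -> Y k i j = 0.
Proof.
move=> k_range same_side; have /matrixP/(_ i j) := Y_anticomm k_range.
rewrite mxE mulmxJ mulJmx mxE /blk_sign same_side; case: ifP => _; lra.
Qed.

Lemma tangent_flag_entry_pair k l (i j : 'I_n) :
  (1 <= k <= d)%N -> (1 <= l <= d)%N -> k != l -> inblk k i -> inblk l j ->
  Y k i j + Y l i j = 0.
Proof.
move=> k_range l_range k_neq_l ki lj.
have [p _ blk_i] := inblkP nb_incr nb_lt_n (ltn_ord i).
have [q _ blk_j] := inblkP nb_incr nb_lt_n (ltn_ord j).
have li : inblk l i = false.
  by move: ki; rewrite !blk_i => /eqP <-; rewrite eq_sym (negbTE k_neq_l).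
have kj : inblk k j = false.
  by move: lj; rewrite !blk_j => /eqP <-; rewrite (negbTE k_neq_l).
have /matrixP/(_ i j) := Y_comm k_range l_range.
by rewrite mxE !mulmxJ !mulJmx mxE !mulmxJ !mulJmx /blk_sign ki lj li kj; lra.
Qed.

Lemma tangent_flag_sum_entry (i j : 'I_n) :
  ~~ inblk d.+1 i -> ~~ inblk d.+1 j -> \sum_(1 <= k < d.+1) Y k i j = 0.
Proof.
have [p p_range blk_i] := inblkP nb_incr nb_lt_n (ltn_ord i).
have [q q_range blk_j] := inblkP nb_incr nb_lt_n (ltn_ord j).
rewrite blk_i blk_j => p_neq_Sd q_neq_Sd.
have Y0 k : (1 <= k < d.+1)%N -> k != p -> k != q -> Y k i j = 0.
  move=> k_range k_neq_p k_neq_q; apply: tangent_flag_entry_same; first lia.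
  by rewrite blk_i blk_j (negbTE k_neq_p) (negbTE k_neq_q).
case: (eqVneq p q) => [p_eq_q | p_neq_q].
  rewrite big_nat big1 // => k k_range.
  by apply: tangent_flag_entry_same; [lia | rewrite blk_i blk_j p_eq_q].
have only_pq k : (1 <= k < d.+1)%N ->
    Y k i j = (if k == p then Y p i j else 0) + (if k == q then Y q i j else 0).
  move=> k_range; case: (eqVneq k p) => [->|k_neq_p].
    by rewrite (negbTE p_neq_q) addr0.
  by case: (eqVneq k q) => [->|k_neq_q]; rewrite ?add0r // Y0 ?addr0.
rewrite (eq_big_nat _ _ only_pq) big_split /=.
rewrite (@big_uniq_only1 _ _ _ _ p); [|exact: iota_uniq|by move=> k _ /negbTE ->].
rewrite (@big_uniq_only1 _ _ _ _ q); [|exact: iota_uniq|by move=> k _ /negbTE ->].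
have p_in : (1 <= p < d.+1)%N by lia.
have q_in : (1 <= q < d.+1)%N by lia.
rewrite !mem_index_iota p_in q_in !eqxx.
by apply: tangent_flag_entry_pair; rewrite ?blk_i ?blk_j ?eqxx //; lia.
Qed.

End Conjugated.
End FlagTangent.

Section Projection.
Variables (R : realType) (n d : nat) (nb : nat -> nat).
Hypothesis nb_incr : forall k, (1 <= k < d)%N -> (nb k < nb k.+1)%N.
Hypothesis nb_lt_n : (nb d < n)%N.
Local Notation inblk := (inblk n d nb).
Local Notation J := (@Jmat R n d nb).
Local Notation blk_sign := (@blk_sign R n d nb).
Variables (L X : 'M[R]_n).
Hypothesis L_skew : L^T = - L.
Hypothesis X_skew : X^T = - X.
Hypothesis L_blk : zero_diag_blocks d nb L.
Hypothesis X_blk : zero_diag_blocks d nb X.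
Local Notation Z := (Zmat d nb L X).

Let Sd_disjoint k (i : 'I_n) : (1 <= k <= d)%N -> inblk k i ==> ~~ inblk d.+1 i.
Proof. by move=> k_range; apply/implyP; exact: inblk_Sd_disjoint. Qed.

Definition T3coord k : 'M[R]_n := L *m J k *m X + X *m J k *m L.
Definition anticommLX : 'M[R]_n := L *m X + X *m L.

Lemma trmx_anticommLX : anticommLX^T = anticommLX.
Proof.
by rewrite /anticommLX linearD /= !trmx_mul L_skew X_skew !mulmxN !mulNmx !opprK addrC.
Qed.

Lemma T3coord_entry k (i j : 'I_n) : (1 <= k <= d.+1)%N -> inblk k i || inblk k j ->
  T3coord k i j = - anticommLX i j.
Proof.
move=> k_range ij_in_k; rewrite /T3coord /anticommLX !mxE opprD -!sumrN.
congr (_ + _); apply: eq_bigr => r _; rewrite mulmxJ /blk_sign; case: ifP => r_in_k;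
  rewrite ?mulrN1 ?mulNr //; case/orP: ij_in_k => [i_in_k | j_in_k].
- by rewrite (L_blk k_range i_in_k r_in_k) !mul0r oppr0.
- by rewrite (X_blk k_range r_in_k j_in_k) !mulr0 oppr0.
- by rewrite (X_blk k_range i_in_k r_in_k) !mul0r oppr0.
- by rewrite (L_blk k_range r_in_k j_in_k) !mulr0 oppr0.
Qed.

Lemma Zmat_block_sum k (i j : 'I_n) : (1 <= k <= d)%N ->
  (inblk k i && inblk d.+1 j) || (inblk d.+1 i && inblk k j) ->
  \sum_(1 <= l < d.+1 | l != k)
     \sum_(r < n | inblk l r) (X i r * L r j + L r i * X j r) = anticommLX i j.
Proof.
move=> k_range ij_blocks; rewrite /anticommLX !mxE -big_split /=.
under eq_bigr do rewrite big_mkcond /=.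
rewrite exchange_big /=; apply: eq_bigr => r _.
have [q q_range blk_r] := inblkP nb_incr nb_lt_n (ltn_ord r).
have r_in_q : inblk q r by rewrite blk_r.
under eq_bigr do rewrite blk_r.
rewrite (@big_uniq_only1 _ _ _ _ q); [|exact: iota_uniq|by move=> l _ /negbTE ->].
rewrite mem_index_iota; case: ifP => [_ | q_out].
  by rewrite eqxx (skew_entry L_skew r i) (skew_entry X_skew r j); ring.
have q_kD : (q == k) || (q == d.+1) by move: q_out; case: eqP; case: eqP => //= *; lia.
have [i_in_q | j_in_q] : inblk q i \/ inblk q j.
  by case/orP: q_kD => /eqP ->; case/orP: ij_blocks => /andP[]; auto.
- by rewrite (L_blk q_range i_in_q r_in_q) (X_blk q_range i_in_q r_in_q) !mul0r addr0.
- by rewrite (X_blk q_range r_in_q j_in_q) (L_blk q_range r_in_q j_in_q) !mulr0 addr0.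
Qed.

Lemma ZmatE k (i j : 'I_n) : (1 <= k <= d)%N ->
  Z k i j = if (inblk k i && inblk d.+1 j) || (inblk d.+1 i && inblk k j)
            then - anticommLX i j else 0.
Proof.
move=> k_range; rewrite mxE; case: ifP => [ij_blocks | _] /=.
  by rewrite Zmat_block_sum // ij_blocks.
by case: ifP => // ij_blocks; rewrite Zmat_block_sum // ij_blocks orbT.
Qed.

Lemma residual_entry k (i j : 'I_n) : (1 <= k <= d)%N -> inblk k i != inblk k j ->
  (T3coord k - Z k) i j =
    if ~~ inblk d.+1 i && ~~ inblk d.+1 j then - anticommLX i j else 0.
Proof.
move=> k_range k_sep; have k_range' : (1 <= k <= d.+1)%N by lia.
have k_ij : inblk k i || inblk k j.
  by move: k_sep; case: (inblk k i); case: (inblk k j).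
rewrite [LHS]mxE [(- Z k) i j]mxE T3coord_entry // ZmatE //.
move: k_sep (Sd_disjoint i k_range) (Sd_disjoint j k_range).
by case: (inblk k i); case: (inblk k j); case: (inblk d.+1 i); case: (inblk d.+1 j);
  rewrite //= ?subrr ?subr0.
Qed.

Lemma residual_orthogonal_entry (Y : tup R n) (i j : 'I_n) :
  (forall k, (1 <= k <= d)%N -> inblk k i = inblk k j -> Y k i j = 0) ->
  (~~ inblk d.+1 i -> ~~ inblk d.+1 j -> \sum_(1 <= k < d.+1) Y k i j = 0) ->
  \sum_(1 <= k < d.+1) (T3coord k - Z k) i j * Y k i j = 0.
Proof.
move=> Y_same Y_sum.
set c := if ~~ inblk d.+1 i && ~~ inblk d.+1 j then - anticommLX i j else 0.
have termE k : (1 <= k < d.+1)%N -> (T3coord k - Z k) i j * Y k i j = c * Y k i j.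
  move=> k_range; have k_range' : (1 <= k <= d)%N by lia.
  have [same_side | k_sep] := eqVneq (inblk k i) (inblk k j).
    by rewrite Y_same // !mulr0.
  by rewrite residual_entry.
rewrite (eq_big_nat _ _ termE) -mulr_sumr /c.
by case: ifP => [/andP[Di Dj] | _]; rewrite ?(Y_sum Di Dj) ?mulr0 ?mul0r.
Qed.

Definition Omega : 'M[R]_n := 4^-1 *: (anticommLX *m J d.+1 - J d.+1 *m anticommLX).

Lemma trmx_Omega : Omega^T = - Omega.
Proof.
rewrite /Omega linearZ /= linearB /= !trmx_mul trmx_anticommLX trmx_Jmat.
by rewrite -scalerN opprB.
Qed.

Lemma OmegaE (i j : 'I_n) :
  Omega i j = 4^-1 * (blk_sign d.+1 j - blk_sign d.+1 i) * anticommLX i j.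
Proof.
rewrite [(Omega) i j]mxE mxE [(- (_ *m _)) i j]mxE mulmxJ mulJmx; ring.
Qed.

Lemma Omega_commJ k : (1 <= k <= d)%N -> Omega *m J k - J k *m Omega = Z k.
Proof.
move=> k_range; apply/matrixP => i j.
rewrite [LHS]mxE [(- (J k *m Omega)) i j]mxE mulmxJ mulJmx ZmatE // OmegaE /blk_sign.
move: (Sd_disjoint i k_range) (Sd_disjoint j k_range).
by case: (inblk k i); case: (inblk k j); case: (inblk d.+1 i); case: (inblk d.+1 j);
  rewrite //= => _ _; lra.
Qed.

End Projection.

Section FrobeniusConj.
Variables (R : realType) (n d : nat).
Variable V0 : 'M[R]_n.
Hypothesis V0_orth : orthogonal_mx V0.

Lemma frob_conjt (A B : tup R n) : frob d (conjt V0 A) (conjt V0 B) = frob d A B.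
Proof.
apply: eq_bigr => k _; rewrite /conjt !trmx_mul trmxK !mulmxA.
by rewrite -[_ *m V0^T *m V0]mulmxA V0_orth mulmx1 mxtrace_mulC !mulmxA V0_orth mul1mx.
Qed.

Lemma tup_sub_conjt (A B : tup R n) :
  tup_sub (conjt V0 A) (conjt V0 B) = conjt V0 (tup_sub A B).
Proof. by apply/funext => k; rewrite /tup_sub /conjt mulmxBr mulmxBl. Qed.

End FrobeniusConj.

Section ProjectionOfT3.
Variables (R : realType) (n d : nat) (nb : nat -> nat).
Hypothesis nb_incr : forall k, (1 <= k < d)%N -> (nb k < nb k.+1)%N.
Hypothesis nb_lt_n : (nb d < n)%N.
Local Notation J := (@Jmat R n d nb).
Variables (V0 L X : 'M[R]_n).
Hypothesis V0_orth : orthogonal_mx V0.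
Hypothesis L_skew : L^T = - L.
Hypothesis X_skew : X^T = - X.
Hypothesis L_blk : zero_diag_blocks d nb L.
Hypothesis X_blk : zero_diag_blocks d nb X.
Local Notation Z := (Zmat d nb L X).

Lemma Zmat_tangent : tangent_flag d nb (conjt V0 J) (conjt V0 Z).
Proof.
set S : 'M[R]_n := 2^-1 *: Omega d nb L X.
have S_skew : S^T = - S by rewrite linearZ /= trmx_Omega // scalerN.
have S2 : S *+ 2 = Omega d nb L X.
  by rewrite /S scalerMnl -mulr_natr mulVf ?pnatr_eq0 // scale1r.
have sS_skew (s : R) : (s *: S)^T = - (s *: S) by rewrite linearZ /= S_skew scalerN.
pose W s := V0 *m cayley (s *: S).
have W0 : W 0 = V0 by rewrite /W scale0r cayley0 mulmx1.
have dW : is_derive (0 : R) 1 W (V0 *m Omega d nb L X).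
  have := is_derive_mulmx (is_derive_cst V0 (0 : R) 1) (is_derive_cayley0 S_skew).
  by rewrite mul0mx add0r S2.
exists (fun s => conjt (W s) J); split; [|split; [|split]].
- move=> s; exists (W s); split => //.
  exact: (orthogonal_mxM V0_orth (cayley_orthogonal (sS_skew s))).
- by move=> k _; rewrite W0.
- move=> k _ t; apply: ex_derive; apply: is_derive_conjmx; apply: derivableP.
  apply: ex_derive; apply: is_derive_mulmx (is_derive_cst V0 t 1) _.
  exact/derivableP/derivable_cayley.
- move=> k k_range; have [_ ->] := is_derive_conjmx (J k) dW.
  rewrite W0 /conjt -(Omega_commJ nb_incr nb_lt_n L_skew X_skew L_blk X_blk k_range).
  by rewrite trmx_mul trmx_Omega // mulNmx mulmxN mulmxBr mulmxBl !mulmxA.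
Qed.

Lemma T3_residual_orthogonal y : tangent_flag d nb (conjt V0 J) y ->
  frob d (tup_sub (T3 d nb V0 L X) (conjt V0 Z)) y = 0.
Proof.
have yE : y = conjt V0 (conjt V0^T y).
  apply/funext => k; rewrite /conjt trmxK !mulmxA orthogonal_mxC // mul1mx.
  by rewrite -mulmxA orthogonal_mxC // mulmx1.
rewrite yE; set Y := conjt V0^T y => Y_tangent.
rewrite /T3 tup_sub_conjt // frob_conjt // /frob.
under eq_bigr do rewrite mxtrace_trmx_mul.
rewrite exchange_big /=; apply: big1 => i _.
rewrite exchange_big /=; apply: big1 => j _.
apply: (residual_orthogonal_entry nb_incr nb_lt_n L_skew X_skew L_blk X_blk).
- by move=> k k_range; apply: (tangent_flag_entry_same V0_orth Y_tangent k_range).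
- exact: (tangent_flag_sum_entry nb_incr nb_lt_n V0_orth Y_tangent).
Qed.

End ProjectionOfT3.

Theorem lemmaA2 (R : realType) (n d : nat) (nb : nat -> nat)
  (hd : (0 < d)%N) (hnb1 : (0 < nb 1%N)%N)
  (hnb : forall k, (1 <= k < d)%N -> (nb k < nb k.+1)%N)
  (hnbd : (nb d < n)%N)
  (V X : R -> 'M[R]_n)
  (hVder : forall t, derivable V t 1)
  (hVorth : forall t, orthogonal_mx (V t))
  (hLam : forall t, zero_diag_blocks d nb (Lam V t))
  (hXder : forall t, derivable X t 1)
  (hXskew : forall t, (X t)^T = - X t)
  (hXblk : forall t, zero_diag_blocks d nb (X t)) :
  forall t : R,
    is_orth_proj d (tangent_flag d nb (conjt (V t) (@Jmat R n d nb)))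
      (T3 d nb (V t) (Lam V t) (X t))
      (conjt (V t) (Zmat d nb (Lam V t) (X t))).
Proof.
(* The claim is pointwise in [t]. *)
move=> t; have Lam_skew := orthogonal_curve_skew (hVder t) hVorth.
split.
- exact: (Zmat_tangent hnb hnbd (hVorth t) Lam_skew (hXskew t) (hLam t) (hXblk t)).
- exact: (T3_residual_orthogonal hnb hnbd (hVorth t) Lam_skew (hXskew t) (hLam t)
    (hXblk t)).
Qed.
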